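(* Let $p=(p_1,\dots,p_d)$ and $q=(q_1,\dots,q_d)$ be probability vectors with all $q_i>0$ and $p_i\ge\tau$ for all $i$, where $0<\tau\le1/3$. Then $$\sum_{i=1}^d(\log p_i-\log q_i)^2\le\frac{12\log(\tau)^2}{\tau}\,\mathrm{KL}(p\|q)+\frac{9}{\tau^2}\,\mathrm{KL}(p\|q)^2,$$ where $\mathrm{KL}(p\|q)=\sum_i p_i\log(p_i/q_i)$. *)

(* concrete reals R. Vectors in R^d are functions nat -> R,
   of which only the indices 0..d-1 are used. *)
From Stdlib Require Import Reals.
Open Scope R_scope.

Fixpoint sumR (d : nat) (f : nat -> R) : R :=
  match d with
  | O => 0
  | S n => sumR n f + f n
  end.

Definition prob_vec (d : nat) (p : nat -> R) : Prop :=
  (forall i, (i < d)%nat -> 0 <= p i) /\ sumR d p = 1.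

Definition KL (d : nat) (p q : nat -> R) : R :=
  sumR d (fun i => p i * ln (p i / q i)).

(* Writing t_i = ln q_i - ln p_i and g(t) = e^t - 1 - t >= 0, the identity
   sum_i (q_i - p_i) = 0 gives KL(p||q) = sum_i p_i g(t_i) >= tau * sum_i g(t_i).
   The scalar inequality t^2 <= 12 g(t) + 9 g(t)^2 (from e^t >= (1 + t/2)^2 when
   t >= -2, and from e^t >= 1 + t otherwise) then bounds the left-hand side by
   12 S + 9 S^2 with S = sum_i g(t_i) <= KL/tau; finally tau <= 1/3 < 1/e gives
   ln(tau)^2 >= 1. *)
From Stdlib Require Import Reals Lra Psatz.
Open Scope R_scope.

Lemma sumR_ext d f g :
  (forall i, (i < d)%nat -> f i = g i) -> sumR d f = sumR d g.
Proof.
induction d as [|d IH]; simpl; intros Hfg; [reflexivity|].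
rewrite (Hfg d) by lia. rewrite IH by (intros; apply Hfg; lia). reflexivity.
Qed.

Lemma sumR_le d f g :
  (forall i, (i < d)%nat -> f i <= g i) -> sumR d f <= sumR d g.
Proof.
induction d as [|d IH]; simpl; intros Hfg; [lra|].
assert (f d <= g d) by (apply Hfg; lia).
assert (sumR d f <= sumR d g) by (apply IH; intros; apply Hfg; lia).
lra.
Qed.

Lemma sumR_ge0 d f : (forall i, (i < d)%nat -> 0 <= f i) -> 0 <= sumR d f.
Proof.
intros Hf. replace 0 with (sumR d (fun _ => 0)).
- now apply sumR_le.
- induction d as [|d IH]; simpl; [reflexivity|]. rewrite IH; [ring|auto].
Qed.

Lemma sumR_lin d a b f g :
  sumR d (fun i => a * f i + b * g i) = a * sumR d f + b * sumR d g.
Proof. induction d as [|d IH]; simpl; [ring|]. rewrite IH. ring. Qed.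

Lemma sumR_sqr_le d f :
  (forall i, (i < d)%nat -> 0 <= f i) -> sumR d (fun i => f i ^ 2) <= sumR d f ^ 2.
Proof.
induction d as [|d IH]; simpl; intros Hf; [lra|].
assert (0 <= f d) by (apply Hf; lia).
assert (0 <= sumR d f) by (apply sumR_ge0; intros; apply Hf; lia).
assert (sumR d (fun i => f i ^ 2) <= sumR d f ^ 2) by (apply IH; intros; apply Hf; lia).
simpl in *. nra.
Qed.

Definition exp_gap (t : R) : R := exp t - 1 - t.

Lemma exp_gap_ge0 t : 0 <= exp_gap t.
Proof. unfold exp_gap. pose proof (exp_ineq1_le t). lra. Qed.

Lemma sqr_le_exp_gap t : t ^ 2 <= 12 * exp_gap t + 9 * exp_gap t ^ 2.
Proof.
unfold exp_gap. destruct (Rle_lt_dec (-2) t).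
- pose proof (exp_ineq1_le (t / 2)).
  assert (Esq : exp t = exp (t / 2) * exp (t / 2)) by (rewrite <- exp_plus; f_equal; lra).
  assert (exp t >= (1 + t / 2) * (1 + t / 2)) by (rewrite Esq; apply Rmult_ge_compat; lra).
  nra.
- pose proof (exp_ineq1_le t). pose proof (exp_pos t). nra.
Qed.

Lemma KL_exp_gap d p q :
  sumR d p = 1 -> sumR d q = 1 ->
  (forall i, (i < d)%nat -> 0 < p i) -> (forall i, (i < d)%nat -> 0 < q i) ->
  KL d p q = sumR d (fun i => p i * exp_gap (ln (q i) - ln (p i))).
Proof.
intros Hp1 Hq1 Hp Hq.
assert (Hterm : KL d p q
          = sumR d (fun i => 1 * (p i * exp_gap (ln (q i) - ln (p i))) + 1 * (p i - q i))).
{ apply sumR_ext. intros i Hi.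
  specialize (Hp i Hi). specialize (Hq i Hi).
  assert (Eexp : exp (ln (q i) - ln (p i)) = q i / p i).
  { unfold Rminus. rewrite exp_plus, exp_Ropp, !exp_ln by assumption. reflexivity. }
  unfold exp_gap. unfold Rdiv. rewrite Eexp, ln_mult, ln_Rinv by (auto using Rinv_0_lt_compat). field. lra. }
assert (Hmass : sumR d (fun i => p i - q i) = 0).
{ rewrite (sumR_ext d _ (fun i => 1 * p i + (-1) * q i)) by (intros; ring).
  rewrite sumR_lin, Hp1, Hq1. ring. }
rewrite Hterm, sumR_lin, Hmass. ring.
Qed.

Lemma ln_le_m1 x : 0 < x -> x <= 1 / 3 -> ln x <= -1.
Proof.
intros Hx0 Hx3. apply Rnot_lt_le. intros Hlt.
apply exp_increasing in Hlt.
replace (-1) with (- (1)) in Hlt by ring. rewrite exp_ln, exp_Ropp in Hlt by assumption.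
pose proof exp_le_3. pose proof (exp_pos 1).
assert (/ 3 <= / exp 1) by (apply Rinv_le_contravar; lra).
lra.
Qed.

Lemma quadratic_bound_rescale S K L tau :
  0 < tau -> 0 <= S -> tau * S <= K -> 1 <= L ->
  12 * S + 9 * S ^ 2 <= 12 * L / tau * K + 9 / tau ^ 2 * K ^ 2.
Proof.
intros Htau HS HSK HL.
assert (HSKt : S <= K / tau) by (apply Rmult_le_reg_l with tau; [|field_simplify]; lra).
replace (12 * L / tau * K + 9 / tau ^ 2 * K ^ 2)
  with (12 * L * (K / tau) + 9 * (K / tau) ^ 2) by (field; lra).
nra.
Qed.

Theorem mainTheorem17 (d : nat) (p q : nat -> R) (tau : R) :
  prob_vec d p -> prob_vec d q ->
  (forall i, (i < d)%nat -> 0 < q i) ->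
  (forall i, (i < d)%nat -> tau <= p i) ->
  0 < tau -> tau <= 1 / 3 ->
  sumR d (fun i => (ln (p i) - ln (q i)) ^ 2)
    <= 12 * (ln tau) ^ 2 / tau * KL d p q + 9 / tau ^ 2 * (KL d p q) ^ 2.
Proof.
intros [_ Hp1] [_ Hq1] Hq Hptau Htau0 Htau3.
set (g := fun i => exp_gap (ln (q i) - ln (p i))).
assert (Hp : forall i, (i < d)%nat -> 0 < p i) by (intros i Hi; specialize (Hptau i Hi); lra).
assert (Hg : forall i, (i < d)%nat -> 0 <= g i) by (intros; apply exp_gap_ge0).
assert (HKL : tau * sumR d g <= KL d p q).
{ rewrite (KL_exp_gap d p q Hp1 Hq1 Hp Hq).
  rewrite <- (Rplus_0_r (tau * sumR d g)), <- (Rmult_0_l (sumR d g)), <- sumR_lin.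
  apply sumR_le. intros i Hi. specialize (Hg i Hi). specialize (Hptau i Hi).
  change (exp_gap (ln (q i) - ln (p i))) with (g i). nra. }
apply Rle_trans with (12 * sumR d g + 9 * sumR d g ^ 2).
- apply Rle_trans with (sumR d (fun i => 12 * g i + 9 * g i ^ 2)).
  + apply sumR_le. intros i _. unfold g.
    replace ((ln (p i) - ln (q i)) ^ 2) with ((ln (q i) - ln (p i)) ^ 2) by ring.
    apply sqr_le_exp_gap.
  + rewrite sumR_lin. pose proof (sumR_sqr_le d g Hg). lra.
- apply quadratic_bound_rescale; [assumption | now apply sumR_ge0 | assumption |].
  pose proof (ln_le_m1 tau Htau0 Htau3). nra.
Qed.
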